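(* Let $m,d,k\ge1$ be integers. If the hypergrid $\mathcal{H}_{m,d}$ has a Steiner $k$-TC-spanner $H$, then it also has a (non-Steiner) $k$-TC-spanner with at most as many edges as $H$.
   Context: $\mathcal{H}_{m,d}$ is the directed graph on $[m]^d$ with an edge $(x,y)$ whenever $y$ and $x$ differ in exactly one coordinate $i$ with $y_i-x_i=1$. For a directed graph $G=(V,E)$, a $k$-TC-spanner is a graph $H=(V,E_H)$ with $E_H$ contained in the transitive closure of $G$ such that whenever $v$ is reachable from $u$ in $G$, $H$ has a path from $u$ to $v$ of length at most $k$. A Steiner $k$-TC-spanner is a directed graph $H=(V_H,E_H)$ with $V\subseteq V_H$ such that for all $u,v\in V$: if $v$ is reachable from $u$ in $G$ then $H$ has a path from $u$ to $v$ of length at most $k$, and otherwise $v$ is not reachable from $u$ in $H$. *)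

From mathcomp Require Import all_boot.
Set Implicit Arguments. Unset Strict Implicit. Unset Printing Implicit Defensive.

(* The hypergrid H_{m,d}: vertices [m]^d encoded as {ffun 'I_d -> 'I_m}
   (coordinate values 0..m-1 instead of 1..m); edge (x,y) iff y and x differ
   in exactly one coordinate i with y_i - x_i = 1. *)
Definition hypergrid_edge (m d : nat) : rel {ffun 'I_d -> 'I_m} :=
  fun x y => [exists i : 'I_d, (val (y i) == (val (x i)).+1) &&
                               [forall j : 'I_d, (j != i) ==> (y j == x j)]].

Definition path_le (T : finType) (E : rel T) (k : nat) (u v : T) : Prop :=
  exists p : seq T, size p <= k /\ path E u p /\ last u p = v.

Definition num_edges (T : finType) (E : rel T) : nat :=
  #|[set p : T * T | E p.1 p.2]|.

Definition TC_spanner (V : finType) (e : rel V) (k : nat) (E : rel V) : Prop :=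
  (forall u v, E u v -> connect e u v) /\
  (forall u v, connect e u v -> path_le E k u v).

Definition Steiner_TC_spanner (V : finType) (e : rel V) (k : nat)
    (T : finType) (f : V -> T) (E : rel T) : Prop :=
  injective f /\
  (forall u v : V,
      (connect e u v -> path_le E k (f u) (f v)) /\
      (~~ connect e u v -> ~~ connect E (f u) (f v))).

From Pilot Require Import Defs.
From mathcomp Require Import all_boot.
Set Implicit Arguments. Unset Strict Implicit. Unset Printing Implicit Defensive.

(* Reachability in the hypergrid is the coordinatewise order. Send every vertex
   t of the Steiner spanner to the coordinatewise maximum of the grid points
   whose images reach t. This projection is monotone along the edges of H, and
   it fixes the embedded grid points because H only connects comparable ones.
   The image of H under the projection is therefore an ordinary k-TC-spanner,
   and taking images can only merge edges. *)

Section HypergridReachability.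

Variables m d : nat.
Implicit Types x y z : {ffun 'I_d -> 'I_m}.

Lemma hypergrid_edge_le x y : hypergrid_edge x y -> forall i, x i <= y i.
Proof.
move=> /existsP[i /andP[/eqP y_i /forallP y_j]] j.
have [-> | ne_ji] := eqVneq j i; first by rewrite y_i.
by move: (y_j j); rewrite ne_ji => /eqP ->.
Qed.

Lemma hypergrid_connect_le x y :
  connect (@hypergrid_edge m d) x y -> forall i, x i <= y i.
Proof.
move=> /connectP[p]; elim: p x => [|z p IHp] x /=; first by move=> _ -> i.
move=> /andP[xz zp] y_last i.
exact: leq_trans (hypergrid_edge_le xz i) (IHp z zp y_last i).
Qed.

Lemma hypergrid_edge_toward x y i : (forall j, x j <= y j) -> x i < y i ->
  exists2 z, hypergrid_edge x z &
    (forall j, z j <= y j) /\ \sum_j (y j - z j) < \sum_j (y j - x j).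
Proof.
move=> le_xy lt_i; have lt_m : (x i).+1 < m := leq_ltn_trans lt_i (ltn_ord _).
pose z := [ffun j => if j == i then Ordinal lt_m else x j].
have z_i : val (z i) = (x i).+1 by rewrite ffunE eqxx.
have z_j j : j != i -> z j = x j by rewrite ffunE => /negbTE ->.
exists z; first by apply/existsP; exists i; rewrite z_i eqxx /=;
  apply/forallP => j; apply/implyP => /z_j ->.
split=> [j|]; first by have [->|/z_j ->] := eqVneq j i; rewrite ?z_i.
rewrite (bigD1 i) //= [X in _ < X](bigD1 i) //= z_i.
rewrite (eq_bigr (fun j => y j - x j)) => [|j /z_j -> //].
by rewrite ltn_add2r subnS prednK // subn_gt0.
Qed.

Lemma le_hypergrid_connect x y :
  (forall i, x i <= y i) -> connect (@hypergrid_edge m d) x y.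
Proof.
have [n] := ubnP (\sum_i (y i - x i)); elim: n x => // n IHn x lt_n le_xy.
case: (pickP (fun i => x i < y i)) => [i lt_i | ge_xy].
  have [z xz [le_zy lt_sum]] := hypergrid_edge_toward le_xy lt_i.
  apply: connect_trans (connect1 xz) (IHn z _ le_zy).
  exact: leq_trans lt_sum _.
suff -> : x = y by exact: connect0.
apply/ffunP => i; apply: val_inj; apply/eqP; rewrite eqn_leq le_xy /=.
by rewrite leqNgt ge_xy.
Qed.

End HypergridReachability.

Section ImageGraph.

Variables (T V : finType) (pi : T -> V) (E : rel T).

Definition image_rel : rel V :=
  fun x y => (x, y) \in [set (pi p.1, pi p.2) | p in [set p : T * T | E p.1 p.2]].

Lemma num_edges_image_rel : num_edges image_rel <= num_edges E.
Proof.
rewrite /num_edges.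
apply: leq_trans (leq_imset_card (fun p => (pi p.1, pi p.2)) _).
by apply: subset_leq_card; apply/subsetP => -[x y]; rewrite inE.
Qed.

Lemma image_rel_sub (R : rel V) :
  (forall a b, E a b -> R (pi a) (pi b)) -> forall x y, image_rel x y -> R x y.
Proof. by move=> ER x y /imsetP[[a b]]; rewrite inE => /ER ? [-> ->]. Qed.

(* Unqualified, [path_le] would denote the lemma of path.v. *)
Lemma path_le_image_rel k a b :
  Defs.path_le E k a b -> Defs.path_le image_rel k (pi a) (pi b).
Proof.
move=> [p [size_p [E_p last_p]]]; exists (map pi p).
rewrite size_map last_map last_p; split=> //; split=> //.
by apply: homo_path E_p => u v Euv; apply/imsetP; exists (u, v); rewrite ?inE.
Qed.

End ImageGraph.

Section GridProjection.

Variables (m d : nat) (T : finType) (f : {ffun 'I_d -> 'I_m.+1} -> T) (E : rel T).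

Definition grid_proj (t : T) : {ffun 'I_d -> 'I_m.+1} :=
  [ffun i => inord (\max_(u | connect E (f u) t) u i)].

Lemma grid_projE t i : grid_proj t i = \max_(u | connect E (f u) t) u i :> nat.
Proof.
rewrite ffunE inordK // ltnS; apply/bigmax_leqP => u _.
by rewrite -ltnS ltn_ord.
Qed.

Lemma grid_proj_mono a b : E a b -> forall i, grid_proj a i <= grid_proj b i.
Proof.
move=> Eab i; rewrite !grid_projE; apply/bigmax_leqP => u ua.
apply: (leq_bigmax_cond (P := fun v => connect E (f v) b) (F := fun v => v i : nat)).
exact: connect_trans ua (connect1 Eab).
Qed.

Lemma grid_projK :
  (forall u v, connect E (f u) (f v) -> forall i, u i <= v i) ->
  cancel f grid_proj.
Proof.
move=> reach_le u; apply/ffunP => i; apply: val_inj; apply/eqP.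
rewrite /= grid_projE eqn_leq; apply/andP; split.
  by apply/bigmax_leqP => v /reach_le.
apply: (leq_bigmax_cond (P := fun v => connect E (f v) (f u)) (F := fun v => v i : nat)).
exact: connect0.
Qed.

End GridProjection.

Theorem corollary2 (m d k : nat) (hm : 1 <= m) (hd : 1 <= d) (hk : 1 <= k)
    (T : finType) (f : {ffun 'I_d -> 'I_m} -> T) (EH : rel T) :
  Steiner_TC_spanner (@hypergrid_edge m d) k f EH ->
  exists E : rel {ffun 'I_d -> 'I_m},
    TC_spanner (@hypergrid_edge m d) k E /\ num_edges E <= num_edges EH.
Proof.
case: m hm f => // m _ f [_ spanner].
have reach_le u v : connect EH (f u) (f v) -> forall i, u i <= v i.
  case: (boolP (connect (@hypergrid_edge _ _) u v)) => [/hypergrid_connect_le // |].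
  by move=> /(spanner u v).2 /negbTE ->.
have proj_f := grid_projK reach_le.
exists (image_rel (grid_proj f EH) EH); split; last exact: num_edges_image_rel.
split.
  apply: image_rel_sub => a b Eab.
  by apply: le_hypergrid_connect; apply: grid_proj_mono.
move=> u v /(spanner u v).1 /(path_le_image_rel (grid_proj f EH)).
by rewrite !proj_f.
Qed.
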